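(* Let $G$ be a distance-regular graph of diameter $d$ admitting a distance magic labeling $l$. If $D$ is a non-empty subset of $\{0,1,\dots,d\}$, then $l$ is either a $D$-magic labeling or an $(\alpha,\delta)$-$D$-antimagic labeling of $G$ for some $\alpha,\delta$. Moreover, if $G$ is bipartite, then $l$ is a $D$-magic labeling for every non-empty $D\subseteq\{1,3,5,\dots\}$.
   Context: A connected graph $G$ of diameter $d$ is distance-regular if there are non-negative integers $b_i,c_i$ ($0\le i\le d$) such that for any two vertices $x,y$ at distance $i$, $y$ has exactly $c_i$ neighbours at distance $i-1$ from $x$ and exactly $b_i$ neighbours at distance $i+1$ from $x$. $G_i(x)$ is the set of vertices at distance $i$ from $x$, and for a set of distances $D$, $N_D(x)=\bigcup_{i\in D}G_i(x)$. For $G$ of order $N$ and a bijection $f:V(G)\to\{1,\dots,N\}$, the weight of $x$ is $w(x)=\sum_{y\in N_D(x)}f(y)$. $f$ is $D$-magic if $w(x)$ is constant; it is $(\alpha,\delta)$-$D$-antimagic if the weights are pairwise distinct and the set $\{w(x):x\in V(G)\}$ is an arithmetic progression starting at $\alpha$ with common difference $\delta>0$. A distance magic labeling is a $\{1\}$-magic labeling. *)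

From mathcomp Require Import all_boot.
Set Implicit Arguments. Unset Strict Implicit. Unset Printing Implicit Defensive.

Section Graphs.
Variable T : finType.
Variable e : rel T.

Definition simple_graph : Prop := symmetric e /\ irreflexive e.

Definition connected_graph : Prop := forall x y : T, connect e x y.

Definition ball (x : T) (n : nat) : {set T} :=
  iter n (fun S => S :|: [set y | [exists z in S, e z y]]) [set x].

(* graph distance (= #|T| if y unreachable from x; irrelevant for connected graphs) *)
Definition dist (x y : T) : nat := find (fun n => y \in ball x n) (iota 0 #|T|).

Definition diameter : nat := \max_(x : T) \max_(y : T) dist x y.

Definition layer (x : T) (i : nat) : {set T} := [set y | dist x y == i].

Definition distance_regular : Prop :=
  simple_graph /\ connected_graph /\
  exists b c : nat -> nat, forall x y : T,
    #|[set z | e y z & (dist x z).+1 == dist x y]| = c (dist x y) /\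
    #|[set z | e y z & dist x z == (dist x y).+1]| = b (dist x y).

Definition bipartite : Prop :=
  exists A : {set T}, forall x y, e x y -> (x \in A) != (y \in A).

Definition labeling (f : T -> nat) : Prop :=
  injective f /\ forall x, 1 <= f x <= #|T|.

Definition weight (D : pred nat) (f : T -> nat) (x : T) : nat :=
  \sum_(y : T | D (dist x y)) f y.

Definition D_magic (D : pred nat) (f : T -> nat) : Prop :=
  labeling f /\ exists k, forall x, weight D f x = k.

Definition D_antimagic (D : pred nat) (f : T -> nat) (alpha delta : nat) : Prop :=
  labeling f /\ 0 < delta /\ injective (weight D f) /\
  forall n, (exists x, weight D f x = n) <-> (exists2 i, i < #|T| & n = alpha + i * delta).

Definition distance_magic (f : T -> nat) : Prop := D_magic (pred1 1) f.

End Graphs.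

From mathcomp Require Import all_boot all_order all_algebra.
From mathcomp Require Import zify ring lra.
Set Implicit Arguments. Unset Strict Implicit. Unset Printing Implicit Defensive.
Import Order.TTheory GRing.Theory Num.Theory.

(* Let k = b_0 be the valency and A_i the distance-i matrix, so that
   A_1 A_i = c_(i+1) A_(i+1) + a_i A_i + b_(i-1) A_(i-1).  By this recurrence an
   eigenvector of A_1 for lam is an eigenvector of every A_i, for p_i(lam) where
   A_i = p_i(A_1).  If l is distance magic with constant m then A_1 l = m 1 and
   A_1 1 = k 1, so u = k l - m 1 is killed by A_1, and
   A_i l = p_i(0) l + (m / k) (p_i(k) - p_i(0)) 1.  Every D-weight is thus an
   affine function s l + C of the labeling; as l is a bijection onto 1..N, the
   weights are constant if s = 0 and otherwise form an arithmetic progression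
   of N distinct terms.  In a bipartite graph a_i = 0, so A_i u = 0 for odd i
   and the weights over odd distances are constant. *)

Section Distance.
Variables (T : finType) (e : rel T).

Lemma ballS x n :
  ball e x n.+1 = ball e x n :|: [set y | [exists z in ball e x n, e z y]].
Proof. by []. Qed.

Lemma subset_ball x n m : n <= m -> ball e x n \subset ball e x m.
Proof.
move=> /subnK <-; elim: (m - n) => [|k IH]; first exact: subxx.
by rewrite addSn ballS (subset_trans IH) ?subsetUl.
Qed.

Lemma path_last_ball x p : path e x p -> last x p \in ball e x (size p).
Proof.
elim/last_ind: p => [|p z IH]; first by rewrite /ball /= set11.
rewrite rcons_path last_rcons size_rcons ballS => /andP[/IH p_ball pz].
by rewrite !inE; apply/orP; right; apply/existsP; exists (last x p); rewrite p_ball.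
Qed.

Hypothesis conn : connected_graph e.

Lemma has_ball x y : has (fun n => y \in ball e x n) (iota 0 #|T|).
Proof.
have /connectP[p p_path ->] := conn x y.
case: (shortenP p_path) => q q_path q_uniq _.
apply/hasP; exists (size q); last exact: path_last_ball.
by rewrite mem_iota /= -ltnS -[(size q).+1](card_uniqP q_uniq) ltnS max_card.
Qed.

Lemma dist_lt_card x y : dist e x y < #|T|.
Proof. by have := has_ball x y; rewrite has_find size_iota. Qed.

Lemma mem_ball_dist x y : y \in ball e x (dist e x y).
Proof. by have := nth_find 0 (has_ball x y); rewrite nth_iota ?dist_lt_card. Qed.

Lemma dist_le_ball x y n : (dist e x y <= n) = (y \in ball e x n).
Proof.
apply/idP/idP => [le_dn | y_n].
  exact: subsetP (subset_ball x le_dn) _ (mem_ball_dist x y).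
rewrite leqNgt; apply/negP => lt_nd.
have := before_find 0 lt_nd.
by rewrite nth_iota ?(ltn_trans lt_nd (dist_lt_card x y)) // add0n y_n.
Qed.

Lemma dist_eq0 x y : (dist e x y == 0) = (y == x).
Proof. by rewrite -leqn0 dist_le_ball inE. Qed.

Lemma dist_xx x : dist e x x = 0.
Proof. by apply/eqP; rewrite dist_eq0. Qed.

Lemma dist_adj x y z : e y z -> dist e x z <= (dist e x y).+1.
Proof.
move=> yz; rewrite dist_le_ball ballS !inE; apply/orP; right.
by apply/existsP; exists y; rewrite mem_ball_dist.
Qed.

Lemma dist_pred x y n : dist e x y = n.+1 -> exists2 z, e z y & dist e x z = n.
Proof.
move=> d_xy; have := mem_ball_dist x y; rewrite d_xy ballS !inE.
case/orP => [|/existsP[z /andP[z_n zy]]]; first by rewrite -dist_le_ball d_xy ltnn.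
exists z => //; apply/eqP; rewrite eqn_leq dist_le_ball z_n -ltnS -d_xy.
exact: dist_adj.
Qed.

Hypotheses (sym : symmetric e) (irr : irreflexive e).

Lemma dist_adj_sym x y z : e y z -> dist e x y <= (dist e x z).+1.
Proof. by rewrite sym; apply: dist_adj. Qed.

Lemma dist1 x y : (dist e x y == 1) = e x y.
Proof.
apply/eqP/idP => [/dist_pred[z zy /eqP] | xy]; first by rewrite dist_eq0 => /eqP <-.
apply/eqP; rewrite eqn_leq (leq_trans (dist_adj x xy)) ?dist_xx // lt0n dist_eq0.
by apply: contraTneq xy => ->; rewrite irr.
Qed.

Lemma bipartite_parity (A : {set T}) :
  (forall x y, e x y -> (x \in A) != (y \in A)) ->
  forall x y, (y \in A) = (x \in A) (+) odd (dist e x y).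
Proof.
move=> hA x y.
suff parity n z : dist e x z = n -> (z \in A) = (x \in A) (+) odd n by exact: parity.
elim: n z => [|n IH] z d_xz.
  by move/eqP: d_xz; rewrite dist_eq0 => /eqP ->; rewrite addbF.
have [y' y'z /IH y'A] := dist_pred d_xz; move: (hA _ _ y'z); rewrite y'A /=.
by case: (z \in A); case: (x \in A); case: (odd n).
Qed.

End Distance.

Section LayerSums.
Variables (T : finType) (e : rel T).
Hypothesis conn : connected_graph e.
Local Open Scope ring_scope.

Definition layer_sum (f : T -> rat) (i : nat) (x : T) : rat :=
  \sum_(y | dist e x y == i) f y.

Lemma eq_layer_sum f g i x : f =1 g -> layer_sum f i x = layer_sum g i x.
Proof. by move=> fg; apply: eq_bigr => y _; rewrite fg. Qed.

Lemma layer_sumZ a f i x : layer_sum (fun y => a * f y) i x = a * layer_sum f i x.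
Proof. by rewrite /layer_sum mulr_sumr. Qed.

Lemma layer_sumB a f a' g i x :
  layer_sum (fun y => a * f y - a' * g y) i x =
  a * layer_sum f i x - a' * layer_sum g i x.
Proof. by rewrite /layer_sum big_split sumrN /= !mulr_sumr. Qed.

Lemma layer_sum0 f x : layer_sum f 0 x = f x.
Proof. by rewrite /layer_sum (big_pred1 x) // => y /=; rewrite dist_eq0. Qed.

Lemma layer_sum_const1 i x :
  layer_sum (fun=> 1) i x = (#|[set y | dist e x y == i]|)%:R.
Proof. by rewrite -sum1dep_card natr_sum. Qed.

Lemma weight_layer_sum D (f : T -> nat) x :
  (weight e D f x)%:R =
  \sum_(i < #|T| | D i) layer_sum (fun y => (f y)%:R) i x.
Proof.
rewrite /weight natr_sum.
rewrite (partition_big (fun y => Ordinal (dist_lt_card conn x y)) (fun i => D i)) //=.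
apply: eq_bigr => i Di; apply: eq_bigl => y.
by rewrite -val_eqE /= andb_idl // => /eqP ->.
Qed.

End LayerSums.

Section DistanceRegular.
Variables (T : finType) (e : rel T).
Hypotheses (sym : symmetric e) (irr : irreflexive e) (conn : connected_graph e).
Variables b c : nat -> nat.
Hypothesis hbc : forall x y : T,
    #|[set z | e y z & (dist e x z).+1 == dist e x y]| = c (dist e x y) /\
    #|[set z | e y z & dist e x z == (dist e x y).+1]| = b (dist e x y).

Definition dr_a i := b 0 - c i - b i.

Lemma card_nbr z : #|[set y | e z y]| = b 0.
Proof.
have [_] := hbc z z; rewrite dist_xx // => <-.
by apply: eq_card => y; rewrite !inE (dist1 conn irr) andbb.
Qed.

Lemma b0_gt0 : 1 < #|T| -> 0 < b 0.
Proof.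
case/card_gt1P => x [y [_ _ yx]].
have [n d_xy] : exists n, dist e x y = n.+1.
  case E: (dist e x y) => [|n]; last by exists n.
  by move/eqP: E; rewrite (dist_eq0 conn) eq_sym (negbTE yx).
have [z zy _] := dist_pred conn d_xy.
by rewrite -(card_nbr y); apply/card_gt0P; exists z; rewrite inE sym.
Qed.

Lemma card_nbr_same_layer x z :
  #|[set y | e z y & dist e x y == dist e x z]| = dr_a (dist e x z).
Proof.
rewrite /dr_a -(card_nbr z); have [<- <-] := hbc x z.
suff -> : #|[set y | e z y]| =
    #|[set y | e z y & (dist e x y).+1 == dist e x z]| +
    #|[set y | e z y & dist e x y == dist e x z]| +
    #|[set y | e z y & dist e x y == (dist e x z).+1]| by lia.
rewrite -!sum1dep_card [LHS]big_mkcond !(big_mkcond (fun y => e z y && _)).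
rewrite -!big_split /=.
apply: eq_bigr => y _; case: (boolP (e z y)) => //= zy.
have := dist_adj conn x zy; have := dist_adj_sym conn sym x zy.
by case: eqP; case: eqP; case: eqP => /=; lia.
Qed.

Lemma card_nbr_layer x z i :
  #|[set y | e z y & dist e x y == i.+1]| =
  (dist e x z == i.+2) * c i.+2 + (dist e x z == i.+1) * dr_a i.+1
  + (dist e x z == i) * b i.
Proof.
have near y : e z y -> dist e x y <= (dist e x z).+1 <= (dist e x y).+2.
  by move=> zy; rewrite (dist_adj conn) // ltnS (dist_adj_sym conn sym).
have [hc hb] := hbc x z; have ha := card_nbr_same_layer x z.
move: (dist e x z) hc hb ha near => j hc hb ha near.
have [j_eq|ne2] := eqVneq j i.+2.
  subst j; rewrite -hc; suff -> : [set y | e z y & dist e x y == i.+1] =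
      [set y | e z y & (dist e x y).+1 == i.+2] by lia.
  by apply/setP => y; rewrite !inE.
have [j_eq|ne1] := eqVneq j i.+1; first by subst j; rewrite ha; lia.
have [j_eq|ne0] := eqVneq j i; first by subst j; rewrite hb; lia.
apply: eq_card0 => y.
by rewrite !inE; apply/andP => -[/near]; case: eqP => // ->; lia.
Qed.

Local Open Scope ring_scope.

Lemma layer_sum_c0 f i x : c i.+1 = 0%N -> layer_sum e f i.+1 x = 0.
Proof.
move=> c0; apply: big1 => y /eqP d_xy.
have [z zy d_xz] := dist_pred conn d_xy.
have [hc _] := hbc x y; move: hc; rewrite d_xy c0 => /card0_eq/(_ z).
by rewrite !inE sym zy d_xz eqxx.
Qed.

Lemma layer_sum_rec f i x :
  layer_sum e (layer_sum e f 1) i.+1 x =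
  (c i.+2)%:R * layer_sum e f i.+2 x + (dr_a i.+1)%:R * layer_sum e f i.+1 x
  + (b i)%:R * layer_sum e f i x.
Proof.
have count_nbr z : \sum_(y | (dist e x y == i.+1) && (dist e y z == 1%N)) f z =
    (#|[set y | e z y & dist e x y == i.+1]|)%:R * f z.
  rewrite -sum1dep_card natr_sum mulr_suml.
  by apply: eq_big => [y|y _]; rewrite ?mul1r // (dist1 conn irr) sym andbC.
have sum_indicator (P : pred T) n :
    \sum_z ((P z)%:R * n%:R) * f z = n%:R * \sum_(z | P z) f z.
  rewrite big_mkcond [in RHS]big_mkcond mulr_sumr /=.
  by apply: eq_bigr => z _; case: (P z); rewrite ?mul1r ?mul0r ?mulr0.
rewrite /layer_sum (exchange_big_dep predT) //=.
under eq_bigr => z _ do rewrite count_nbr card_nbr_layer !natrD !natrM !mulrDl.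
by rewrite !big_split /= !sum_indicator.
Qed.

(* dr_eig lam i = p_i(lam).  When c_(n+2) = 0 the layer n+2 is empty, and the
   junk value x / 0 = 0 is exactly what is needed. *)
Fixpoint dr_eig (lam : rat) (n : nat) : rat :=
  match n with
  | 0 => 1
  | 1 => lam
  | (n'.+1 as n1).+1 =>
      ((lam - (dr_a n1)%:R) * dr_eig lam n1 - (b n')%:R * dr_eig lam n')
        / (c n1.+1)%:R
  end.

Lemma dr_eigSS lam n : dr_eig lam n.+2 =
  ((lam - (dr_a n.+1)%:R) * dr_eig lam n.+1 - (b n)%:R * dr_eig lam n) / (c n.+2)%:R.
Proof. by []. Qed.

Lemma layer_sum_eigen f lam : (forall x, layer_sum e f 1 x = lam * f x) ->
  forall i x, layer_sum e f i x = dr_eig lam i * f x.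
Proof.
move=> f_eig.
suff eig2 i : (forall x, layer_sum e f i x = dr_eig lam i * f x) /\
              (forall x, layer_sum e f i.+1 x = dr_eig lam i.+1 * f x).
  by move=> i; case: (eig2 i).
elim: i => [|i [IH0 IH1]]; first by split=> x; rewrite ?layer_sum0 ?mul1r ?f_eig.
split=> // x.
have [c0 | c_neq0] := eqVneq (c i.+2) 0%N.
  by rewrite layer_sum_c0 // dr_eigSS c0 invr0 mulr0 mul0r.
have := layer_sum_rec f i x.
rewrite (eq_layer_sum _ _ _ f_eig) layer_sumZ IH0 IH1 => rec.
have c_neq0' : (c i.+2)%:R != 0 :> rat by rewrite pnatr_eq0.
apply: (mulfI c_neq0').
rewrite (_ : _ * layer_sum e f i.+2 x = lam * (dr_eig lam i.+1 * f x)
           - (dr_a i.+1)%:R * (dr_eig lam i.+1 * f x) - (b i)%:R * (dr_eig lam i * f x)).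
  by rewrite dr_eigSS; field.
by rewrite rec; ring.
Qed.

Lemma layer_sum_ones_eigen i x : layer_sum e (fun=> 1) i x = dr_eig (b 0)%:R i.
Proof.
rewrite -[RHS]mulr1; apply: layer_sum_eigen => {i}x.
rewrite layer_sum_const1 mulr1 -(card_nbr x); congr _%:R.
by apply: eq_card => y; rewrite !inE (dist1 conn irr).
Qed.

Section Magic.
Variables (l : T -> nat) (m : nat).
Hypothesis hm : forall x, weight e (pred1 1%N) l x = m.
Hypothesis b0_pos : (0 < b 0)%N.

Let lr y : rat := (l y)%:R.
Let u y : rat := (b 0)%:R * lr y - m%:R * 1.

Lemma layer_sum_u1 x : layer_sum e u 1 x = 0.
Proof.
rewrite (layer_sumB e _ lr _ (fun=> 1)) layer_sum_ones_eigen.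
by rewrite /layer_sum -natr_sum -(hm x) mulrC subrr.
Qed.

Lemma scaled_layer_sum_label i x :
  (b 0)%:R * layer_sum e lr i x = layer_sum e u i x + m%:R * dr_eig (b 0)%:R i.
Proof. by rewrite (layer_sumB e _ lr _ (fun=> 1)) layer_sum_ones_eigen subrK. Qed.

Lemma layer_sum_label i x : layer_sum e lr i x =
  dr_eig 0 i * lr x + m%:R / (b 0)%:R * (dr_eig (b 0)%:R i - dr_eig 0 i).
Proof.
have k_neq0 : (b 0)%:R != 0 :> rat by rewrite pnatr_eq0 -lt0n.
apply: (mulfI k_neq0); rewrite scaled_layer_sum_label.
rewrite (layer_sum_eigen (lam := 0)) => [|y]; last by rewrite layer_sum_u1 mul0r.
by rewrite /u; field.
Qed.

Lemma weight_label_affine D :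
  exists s C, forall x, (weight e D l x)%:R = s * (l x)%:R + C :> rat.
Proof.
exists (\sum_(i < #|T| | D i) dr_eig 0 i).
exists (\sum_(i < #|T| | D i) m%:R / (b 0)%:R * (dr_eig (b 0)%:R i - dr_eig 0 i)).
move=> x; rewrite weight_layer_sum // mulr_suml -big_split.
by apply: eq_bigr => i _; rewrite layer_sum_label.
Qed.

Section Bipartite.
Variable A : {set T}.
Hypothesis hA : forall x y, e x y -> (x \in A) != (y \in A).

Lemma dr_a_dist_bipartite x z : dr_a (dist e x z) = 0%N.
Proof.
rewrite -card_nbr_same_layer; apply: eq_card0 => y; rewrite !inE.
apply/andP => -[zy /eqP d_xy]; move: (hA zy).
by rewrite (bipartite_parity conn hA x y) (bipartite_parity conn hA x z) d_xy eqxx.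
Qed.

Lemma layer_sum_odd_eq0 f : (forall x, layer_sum e f 1 x = 0) ->
  forall i x, odd i -> layer_sum e f i x = 0.
Proof.
move=> f1 i x i_odd; rewrite -(odd_double_half i) i_odd add1n.
elim: i./2 => [|n IH]; first exact: f1.
have := layer_sum_rec f n.*2.+1 x.
have -> : layer_sum e (layer_sum e f 1) n.*2.+2 x = 0 by apply: big1 => y _; apply: f1.
have -> : (dr_a n.*2.+2)%:R * layer_sum e f n.*2.+2 x = 0.
  by rewrite mulr_sumr big1 // => z /eqP <-; rewrite dr_a_dist_bipartite mul0r.
rewrite IH mulr0 !addr0 => /esym/eqP.
rewrite mulf_eq0 pnatr_eq0 => /orP[/eqP c0|/eqP //].
by rewrite doubleS layer_sum_c0.
Qed.

Lemma layer_sum_label_odd i x : odd i ->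
  layer_sum e lr i x = m%:R / (b 0)%:R * dr_eig (b 0)%:R i.
Proof.
move=> i_odd; have k_neq0 : (b 0)%:R != 0 :> rat by rewrite pnatr_eq0 -lt0n.
apply: (mulfI k_neq0); rewrite scaled_layer_sum_label.
rewrite layer_sum_odd_eq0 //; last exact: layer_sum_u1.
by field.
Qed.

Lemma weight_label_odd_const (D : pred nat) : (forall i, D i -> odd i) ->
  exists C, forall x, (weight e D l x)%:R = C :> rat.
Proof.
move=> D_odd; exists (\sum_(i < #|T| | D i) m%:R / (b 0)%:R * dr_eig (b 0)%:R i).
move=> x; rewrite weight_layer_sum //.
by apply: eq_bigr => i Di; rewrite layer_sum_label_odd ?D_odd.
Qed.

End Bipartite.

End Magic.

End DistanceRegular.

Section Labelings.
Variable T : finType.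

Lemma inj_lt_card_onto (phi : T -> nat) :
  injective phi -> (forall x, phi x < #|T|) ->
  forall i, i < #|T| -> exists x, phi x = i.
Proof.
move=> phi_inj phi_lt i i_lt; pose psi x : 'I_#|T| := Ordinal (phi_lt x).
have psi_inj : injective psi by move=> x y /(congr1 val)/phi_inj.
have /codomP[x /(congr1 val) /= ->] :=
  inj_card_onto psi_inj (eq_leq (card_ord _)) (Ordinal i_lt).
by exists x.
Qed.

Lemma labeling_onto (l : T -> nat) :
  labeling l -> forall j, 0 < j <= #|T| -> exists x, l x = j.
Proof.
move=> [l_inj l_bd] j j_bd.
have [x lx] : exists x, (l x).-1 = j.-1.
  apply: (@inj_lt_card_onto (fun x => (l x).-1)); last by lia.
    by move=> x y /= lxy; apply: l_inj; move: (l_bd x) (l_bd y); lia.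
  by move=> x; move: (l_bd x); lia.
by exists x; move: (l_bd x); lia.
Qed.

Lemma card_le1_const (w : T -> nat) : #|T| <= 1 -> exists k, forall x, w x = k.
Proof.
move=> T_le1; case: (pickP (fun _ : T => true)) => [x0 _ | T0].
  by exists (w x0) => x; rewrite (card_le1_eqP T_le1 x x0).
by exists 0 => x; have := T0 x.
Qed.

Lemma labeling_rev (l : T -> nat) :
  labeling l -> labeling (fun x => #|T|.+1 - l x).
Proof.
move=> [l_inj l_bd]; set N := #|T| in l_bd *.
split=> [x y /= lxy | x]; last by move: (l_bd x); lia.
by apply: l_inj; move: (l_bd x) (l_bd y); lia.
Qed.

Lemma progression_const_or_antimagic (w phi : T -> nat) alpha delta :
  injective phi -> (forall x, phi x < #|T|) ->
  (forall x, w x = alpha + phi x * delta) ->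
  (forall x, w x = alpha) \/
  [/\ 0 < delta, injective w & forall n,
     (exists x, w x = n) <-> (exists2 i, i < #|T| & n = alpha + i * delta)].
Proof.
move=> phi_inj phi_lt hw; case: (posnP delta) => [delta0 | delta_gt0].
  by left=> x; rewrite hw delta0 muln0 addn0.
right; split=> // [x y | n].
  by rewrite !hw => /addnI/eqP; rewrite eqn_mul2r eqn0Ngt delta_gt0 => /eqP/phi_inj.
split=> [[x <-] | [i i_lt ->]]; first by exists (phi x); rewrite ?hw.
by have [x <-] := inj_lt_card_onto phi_inj phi_lt i_lt; exists x.
Qed.

Local Open Scope ring_scope.

Lemma affine_labeling_progression (l w : T -> nat) (s C : rat) :
  labeling l -> (1 < #|T|)%N -> (forall x, (w x)%:R = s * (l x)%:R + C) ->
  exists alpha delta (phi : T -> nat),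
    [/\ injective phi, forall x, (phi x < #|T|)%N
       & forall x, w x = (alpha + phi x * delta)%N].
Proof.
wlog s_ge0 : l s C / 0 <= s => [ge0_case lab T_gt1 hw | lab T_gt1 hw].
  have [s_ge0|s_lt0] := lerP 0 s; first exact: (ge0_case l s C).
  apply: (ge0_case _ (- s) (C + s * (#|T|.+1)%:R) _ (labeling_rev lab)) => //.
    by rewrite oppr_ge0 ltW.
  move=> x; case: lab => _ /(_ x) /andP[_ lx_le]; rewrite hw natrB; first ring.
  exact: leqW.
have [l_inj l_bd] := lab.
have [x1 l1] : exists x, l x = 1%N by apply: labeling_onto => //; exact: ltnW.
have [x2 l2] : exists x, l x = 2%N by apply: labeling_onto.
have w12 : (w x1 <= w x2)%N by rewrite -(ler_nat rat) !hw l1 l2; lra.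
exists (w x1), (w x2 - w x1)%N, (fun x => (l x).-1); split.
- by move=> x y /= lxy; apply: l_inj; move: (l_bd x) (l_bd y); lia.
- by move=> x; move: (l_bd x); lia.
move=> x; apply/eqP; rewrite -(eqr_nat rat) natrD natrM natrB // -subn1 natrB.
  by rewrite !hw l1 l2; apply/eqP; ring.
by case/andP: (l_bd x).
Qed.

End Labelings.

Theorem theorem2p6 (T : finType) (e : rel T) (l : T -> nat) :
  distance_regular e -> distance_magic e l ->
  (forall D : pred nat,
     (exists i, D i) -> (forall i, D i -> i <= diameter e) ->
     D_magic e D l \/ exists alpha delta, D_antimagic e D l alpha delta) /\
  (bipartite e ->
   forall D : pred nat, (exists i, D i) -> (forall i, D i -> odd i) ->
     D_magic e D l).
Proof.
move=> [[sym irr] [conn [b [c hbc]]]] [lab [m hm]].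
have [T_le1 | T_gt1] := leqP #|T| 1.
  have magic D : D_magic e D l by split; last exact: card_le1_const.
  by split=> [D _ _ | _ D _ _]; [left|]; apply: magic.
have k_gt0 := b0_gt0 sym irr conn hbc T_gt1.
split=> [D _ _ | [A hA] D _ D_odd].
  have [s [C hw]] := weight_label_affine sym irr conn hbc hm k_gt0 D.
  have [alpha [delta [phi [phi_inj phi_lt hw']]]] :=
    affine_labeling_progression lab T_gt1 hw.
  have [w_const | [delta_gt0 w_inj w_range]] :=
    progression_const_or_antimagic phi_inj phi_lt hw'.
    by left; split=> //; exists alpha.
  by right; exists alpha, delta.
have [C hw] := weight_label_odd_const sym irr conn hbc hm k_gt0 hA D_odd.
have [x0 _] := labeling_onto lab (ltnW T_gt1 : 0 < 1 <= #|T|).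
by split=> //; exists (weight e D l x0) => x; apply/eqP; rewrite -(eqr_nat rat) !hw.
Qed.
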